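(* Let $X$ be a set, $B\subseteq\mathbb{R}^X$ an $\mathbb{R}$-subalgebra and $Q\subseteq B$ a quadratic module with $K_{Q,X}=X$ and $m(X)=K_{Q,Y_B}$. Let $f\in\mathbb{R}^X$ and $A=B[f]\subseteq\mathbb{R}^X$. In each of the following cases, the restriction map $p\colon K_{Q',Y_A}\to K_{Q,Y_B}$ is injective, $K_{Q',X}=X$, and $m(X)=K_{Q',Y_A}$: (1) $f=\sqrt[r]{g}$ (pointwise real $r$-th root) with $r$ odd and $g\in B$, and $Q'$ is the quadratic module of $A$ generated by $Q$; (2) $f=\sqrt[s]{g}$ (pointwise nonnegative $s$-th root) with $s$ even, $g\in B$, $g\ge0$ on $X$, and $Q'$ is the quadratic module of $A$ generated by $Q$ and $f$; (3) $f=\frac1g$ with $g\in B$, $g(x)\ne0$ for all $x\in X$, and $Q'$ is the quadratic module of $A$ generated by $Q$; (4) $f=g\cdot\chi_{\{q\ge0\}}+h\cdot\chi_{\{q<0\}}$ for some $g,h,q\in B$ such that for $x\in X$, $q(x)=0$ implies $g(x)=h(x)$, and $Q'$ is the quadratic module of $A$ generated by $Q$ and $-q(f-g)^2$, $q(f-h)^2$.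
   Context: A quadratic module of a commutative unital $\mathbb{R}$-algebra $C$ is a subset $Q\subseteq C$ with $Q+Q\subseteq Q$, $c^2Q\subseteq Q$ for all $c\in C$, and $1\in Q$. For an $\mathbb{R}$-subalgebra $C\subseteq\mathbb{R}^X$ and a quadratic module $Q$ of $C$: $K_{Q,X}:=\{x\in X\mid g(x)\ge0\ \forall g\in Q\}$; $Y_C$ is the set of unital $\mathbb{R}$-algebra homomorphisms $C\to\mathbb{R}$, with the weakest topology making all maps $y\mapsto y(c)$ continuous; $K_{Q,Y_C}:=\{y\in Y_C\mid y(g)\ge0\ \forall g\in Q\}$; $m\colon X\to Y_C$, $m(x)(c)=c(x)$. The map $p\colon Y_A\to Y_B$ is restriction $y\mapsto y|_B$; it maps $K_{Q',Y_A}$ into $K_{Q,Y_B}$ whenever $Q'\cap B\supseteq Q$. $\chi_S$ denotes the characteristic function of $S\subseteq X$, and $\{q\ge0\}=\{x\in X\mid q(x)\ge0\}$, etc. *)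

From Stdlib Require Import Reals.
Open Scope R_scope.

Definition is_subalg {X : Type} (C : (X -> R) -> Prop) : Prop :=
  C (fun _ => 1) /\
  (forall f g, C f -> C g -> C (fun x => f x + g x)) /\
  (forall f g, C f -> C g -> C (fun x => f x * g x)) /\
  (forall (a : R) f, C f -> C (fun x => a * f x)).

Definition is_qmodule {X : Type} (C Q : (X -> R) -> Prop) : Prop :=
  (forall g, Q g -> C g) /\
  (forall g h, Q g -> Q h -> Q (fun x => g x + h x)) /\
  (forall c g, C c -> Q g -> Q (fun x => (c x) ^ 2 * g x)) /\
  Q (fun _ => 1).

Definition qm_gen {X : Type} (C S : (X -> R) -> Prop) : (X -> R) -> Prop :=
  fun g => forall Q, is_qmodule C Q -> (forall s, S s -> Q s) -> Q g.

Definition alg_adj {X : Type} (B : (X -> R) -> Prop) (f : X -> R) : (X -> R) -> Prop :=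
  fun a => forall C, is_subalg C -> (forall b, B b -> C b) -> C f -> C a.

Definition K_X {X : Type} (Q : (X -> R) -> Prop) (x : X) : Prop :=
  forall g, Q g -> 0 <= g x.

(* A point of Y_C is represented by any y : R^X -> R whose restriction to C
   is such a homomorphism; two representatives denote the same point of Y_C
   iff they agree on C. *)
Definition is_char {X : Type} (C : (X -> R) -> Prop) (y : (X -> R) -> R) : Prop :=
  y (fun _ => 1) = 1 /\
  (forall f g, C f -> C g -> y (fun x => f x + g x) = y f + y g) /\
  (forall f g, C f -> C g -> y (fun x => f x * g x) = y f * y g) /\
  (forall (a : R) f, C f -> y (fun x => a * f x) = a * y f).

Definition K_Y {X : Type} (C Q : (X -> R) -> Prop) (y : (X -> R) -> R) : Prop :=
  is_char C y /\ forall g, Q g -> 0 <= y g.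

Definition m_pt {X : Type} (x : X) : (X -> R) -> R := fun c => c x.

Definition m_image_eq {X : Type} (C Q : (X -> R) -> Prop) : Prop :=
  (forall x, K_Y C Q (m_pt x)) /\
  (forall y, K_Y C Q y -> exists x, forall c, C c -> y c = m_pt x c).

Definition restr_injective {X : Type} (B A Q' : (X -> R) -> Prop) : Prop :=
  forall y1 y2, K_Y A Q' y1 -> K_Y A Q' y2 ->
    (forall b, B b -> y1 b = y2 b) -> forall a, A a -> y1 a = y2 a.

Definition prop_concl {X : Type} (B A Q' : (X -> R) -> Prop) : Prop :=
  restr_injective B A Q' /\ (forall x, K_X Q' x) /\ m_image_eq A Q'.

Definition chi_ge0 {X : Type} (q : X -> R) : X -> R :=
  fun x => if Rle_dec 0 (q x) then 1 else 0.
Definition chi_lt0 {X : Type} (q : X -> R) : X -> R :=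
  fun x => if Rlt_dec (q x) 0 then 1 else 0.

(* A = B[f] is generated by B and f, so a point y of Y_A is determined by its
   restriction to B and the value y(f).  For y in K_{Q',Y_A} the restriction lies in
   K_{Q,Y_B} = m(X), i.e. it is evaluation at some x, and everything reduces to
   showing y(f) = f(x).  In each case f(x) is the only real number t satisfying the
   relations that f satisfies over B together with the signs imposed by Q':
   t^r = g(x) for odd r; t >= 0 and t^s = g(x) for even s; t g(x) = 1; and
   (t - g(x)) (t - h(x)) = 0, -q(x) (t - g(x))^2 >= 0, q(x) (t - h(x))^2 >= 0 in the
   piecewise case.  Since the generators of Q' are nonnegative on X, K_{Q',X} = X, and
   two points of K_{Q',Y_A} with the same restriction to B are evaluations at the same
   x on A. *)

From Stdlib Require Import Reals Lia Lra FunctionalExtensionality.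
Open Scope R_scope.

Lemma pow_lt_nonneg (a b : R) (n : nat) :
  (0 < n)%nat -> 0 <= a -> a < b -> a ^ n < b ^ n.
Proof.
  intros Hn Ha Hab. destruct n as [|n]; [inversion Hn|].
  assert (Hle : a ^ n <= b ^ n) by (apply pow_incr; lra).
  assert (Hpos : 0 < b ^ n) by (apply pow_lt; lra).
  assert (0 <= a ^ n) by (apply pow_le; lra).
  simpl. nra.
Qed.

Lemma pow_inj_nonneg (a b : R) (n : nat) :
  (0 < n)%nat -> 0 <= a -> 0 <= b -> a ^ n = b ^ n -> a = b.
Proof.
  intros Hn Ha Hb E.
  destruct (Rtotal_order a b) as [H|[H|H]]; [| exact H |].
  - pose proof (pow_lt_nonneg a b n Hn Ha H). lra.
  - pose proof (pow_lt_nonneg b a n Hn Hb H). lra.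
Qed.

Lemma pow_odd_opp (a : R) (r : nat) : Nat.Odd r -> (- a) ^ r = - a ^ r.
Proof.
  intros [k ->]. replace (- a) with (-1 * a) by ring.
  rewrite Rpow_mult_distr, Nat.add_1_r, pow_1_odd. ring.
Qed.

Lemma pow_odd_inj (a b : R) (r : nat) : Nat.Odd r -> a ^ r = b ^ r -> a = b.
Proof.
  intros Hr E.
  assert (Hr0 : (0 < r)%nat) by (destruct Hr as [k ->]; lia).
  assert (Habs : Rabs a = Rabs b).
  { apply (pow_inj_nonneg _ _ r Hr0); try apply Rabs_pos.
    rewrite !RPow_abs, E. reflexivity. }
  assert (Hab : a = b \/ a = - b).
  { unfold Rabs in Habs. destruct (Rcase_abs a), (Rcase_abs b); lra. }
  destruct Hab as [-> | ->]; [reflexivity|].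
  rewrite pow_odd_opp in E by exact Hr.
  destruct (Req_dec b 0) as [Hb|Hb]; [lra|].
  exfalso. apply (pow_nonzero b r Hb). lra.
Qed.

Lemma pow2_eq0_of_neg_mul (c d : R) : c < 0 -> 0 <= c * d ^ 2 -> d = 0.
Proof.
  intros Hc Hd. destruct (Req_dec d 0) as [|Hd0]; [assumption|].
  pose proof (Rsqr_pos_lt d Hd0). unfold Rsqr in *. simpl in Hd. nra.
Qed.

Lemma piecewise_root (t a b c : R) :
  (c = 0 -> a = b) -> (t - a) * (t - b) = 0 ->
  0 <= - c * (t - a) ^ 2 -> 0 <= c * (t - b) ^ 2 ->
  (0 <= c -> t = a) /\ (c < 0 -> t = b).
Proof.
  intros Hc Hroot Ha Hb.
  destruct (Rmult_integral _ _ Hroot) as [Ht|Ht]; split; intro Hs; try lra.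
  - pose proof (pow2_eq0_of_neg_mul c (t - b) Hs Hb). lra.
  - destruct (Req_dec c 0) as [Hc0|Hc0]; [specialize (Hc Hc0); lra|].
    pose proof (pow2_eq0_of_neg_mul (- c) (t - a) ltac:(lra) Ha). lra.
Qed.

Lemma piecewise_relations (t a b c : R) :
  (0 <= c -> t = a) -> (c < 0 -> t = b) ->
  (t - a) * (t - b) = 0 /\ 0 <= - c * (t - a) ^ 2 /\ 0 <= c * (t - b) ^ 2.
Proof.
  intros Ha Hb. pose proof (pow2_ge_0 (t - a)). pose proof (pow2_ge_0 (t - b)).
  destruct (Rle_or_lt 0 c) as [Hc|Hc]; [rewrite (Ha Hc) in * | rewrite (Hb Hc) in *];
    repeat split; try ring; nra.
Qed.

Section Subalgebra.
Context {X : Type} (C : (X -> R) -> Prop) (HC : is_subalg C).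

Lemma subalg_mul (u v : X -> R) : C u -> C v -> C (fun x => u x * v x).
Proof. apply HC. Qed.

Lemma subalg_opp (u : X -> R) : C u -> C (fun x => - u x).
Proof.
  intros Hu. replace (fun x => - u x) with (fun x => -1 * u x)
    by (apply functional_extensionality; intro; ring).
  apply HC, Hu.
Qed.

Lemma subalg_sub (u v : X -> R) : C u -> C v -> C (fun x => u x - v x).
Proof. intros Hu Hv. apply HC; [exact Hu | apply subalg_opp, Hv]. Qed.

Lemma subalg_pow (u : X -> R) (n : nat) : C u -> C (fun x => u x ^ n).
Proof.
  intros Hu. induction n as [|n IH]; [apply HC|].
  exact (subalg_mul _ _ Hu IH).
Qed.

Variable y : (X -> R) -> R.
Hypothesis Hy : is_char C y.

Lemma char_mul (u v : X -> R) : C u -> C v -> y (fun x => u x * v x) = y u * y v.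
Proof. apply Hy. Qed.

Lemma char_opp (u : X -> R) : C u -> y (fun x => - u x) = - y u.
Proof.
  intros Hu. replace (fun x => - u x) with (fun x => -1 * u x)
    by (apply functional_extensionality; intro; ring).
  rewrite (proj2 (proj2 (proj2 Hy))) by exact Hu. ring.
Qed.

Lemma char_sub (u v : X -> R) : C u -> C v -> y (fun x => u x - v x) = y u - y v.
Proof.
  intros Hu Hv. unfold Rminus.
  rewrite (proj1 (proj2 Hy)) by (exact Hu || apply subalg_opp, Hv).
  rewrite char_opp by exact Hv. reflexivity.
Qed.

Lemma char_pow (u : X -> R) (n : nat) : C u -> y (fun x => u x ^ n) = y u ^ n.
Proof.
  intros Hu. induction n as [|n IH]; [apply Hy|].
  simpl. rewrite <- IH. exact (char_mul _ _ Hu (subalg_pow u n Hu)).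
Qed.

Lemma char_vanishing (u : X -> R) : C u -> (forall x, u x = 0) -> y u = 0.
Proof.
  intros Hu Hu0. replace u with (fun x => 0 * u x)
    by (apply functional_extensionality; intro x; rewrite Hu0; ring).
  rewrite (proj2 (proj2 (proj2 Hy))) by exact Hu. ring.
Qed.

End Subalgebra.

Section Generation.
Context {X : Type}.

Lemma alg_adj_subalg (B : (X -> R) -> Prop) (f : X -> R) : is_subalg (alg_adj B f).
Proof.
  repeat split.
  - intros C HC _ _. apply HC.
  - intros u v Hu Hv C HC HBC Hf. apply HC; [apply Hu | apply Hv]; assumption.
  - intros u v Hu Hv C HC HBC Hf. apply HC; [apply Hu | apply Hv]; assumption.
  - intros a u Hu C HC HBC Hf. apply HC, Hu; assumption.
Qed.

Lemma alg_adj_base (B : (X -> R) -> Prop) (f b : X -> R) : B b -> alg_adj B f b.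
Proof. intros Hb C _ HBC _. exact (HBC b Hb). Qed.

Lemma alg_adj_gen (B : (X -> R) -> Prop) (f : X -> R) : alg_adj B f f.
Proof. intros C _ _ Hf. exact Hf. Qed.

Lemma char_adj_eval (B : (X -> R) -> Prop) (f : X -> R) (y : (X -> R) -> R) (x : X) :
  is_char (alg_adj B f) y -> (forall b, B b -> y b = b x) -> y f = f x ->
  forall a, alg_adj B f a -> y a = a x.
Proof.
  intros Hy HyB Hyf a Ha.
  pose proof (alg_adj_subalg B f) as (HA1 & HAadd & HAmul & HAscal).
  destruct Hy as (Hy1 & Hyadd & Hymul & Hyscal).
  apply (Ha (fun c => alg_adj B f c /\ y c = c x)).
  - split; [|split; [|split]].
    + split; [exact HA1 | exact Hy1].
    + intros u v [Hu Eu] [Hv Ev]. split; [exact (HAadd u v Hu Hv)|].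
      rewrite Hyadd, Eu, Ev; auto.
    + intros u v [Hu Eu] [Hv Ev]. split; [exact (HAmul u v Hu Hv)|].
      rewrite Hymul, Eu, Ev; auto.
    + intros c u [Hu Eu]. split; [exact (HAscal c u Hu)|].
      rewrite Hyscal, Eu; auto.
  - intros b Hb. split; [apply alg_adj_base, Hb | apply HyB, Hb].
  - split; [apply alg_adj_gen | exact Hyf].
Qed.

Lemma qm_gen_base (C S : (X -> R) -> Prop) (s : X -> R) : S s -> qm_gen C S s.
Proof. intros Hs Q _ HSQ. exact (HSQ s Hs). Qed.

Lemma qm_gen_nonneg (C S : (X -> R) -> Prop) :
  is_subalg C -> (forall s, S s -> C s) -> (forall s, S s -> forall x, 0 <= s x) ->
  forall x, K_X (qm_gen C S) x.
Proof.
  intros HC HSC HS x g Hg.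
  refine (proj2 (Hg (fun k => C k /\ forall x, 0 <= k x) _ _) x).
  - split; [|split; [|split]].
    + intros k [Hk _]. exact Hk.
    + intros u v [Hu Pu] [Hv Pv]. split; [apply HC; assumption|].
      intro z. specialize (Pu z). specialize (Pv z). lra.
    + intros c u Hc [Hu Pu].
      split; [apply (subalg_mul C HC); [apply (subalg_pow C HC) |]; assumption|].
      intro z. apply Rmult_le_pos; [apply pow2_ge_0 | apply Pu].
    + split; [apply HC | intro; lra].
  - intros s Hs. split; [apply HSC | apply HS]; exact Hs.
Qed.

Lemma K_Y_restrict (A B Q Q' : (X -> R) -> Prop) (y : (X -> R) -> R) :
  (forall b, B b -> A b) -> (forall k, Q k -> Q' k) -> K_Y A Q' y -> K_Y B Q y.
Proof.
  intros HBA HQQ' [(Hy1 & Hyadd & Hymul & Hyscal) Hpos].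
  repeat split; auto.
Qed.

End Generation.

Section Extension.
Context {X : Type} (B Q S : (X -> R) -> Prop) (f : X -> R).
Local Notation A := (alg_adj B f).
Local Notation Q' := (qm_gen A S).

Hypothesis Hm : m_image_eq B Q.
Hypothesis HQS : forall k, Q k -> S k.
Hypothesis HSA : forall s, S s -> A s.
Hypothesis HS_nonneg : forall s, S s -> forall x, 0 <= s x.
Hypothesis Hf_eval : forall y x, K_Y A Q' y -> (forall b, B b -> y b = b x) -> y f = f x.

Lemma K_Y_adj_eval (y : (X -> R) -> R) (x : X) :
  K_Y A Q' y -> (forall b, B b -> y b = b x) -> forall a, A a -> y a = a x.
Proof.
  intros Hy HyB. apply char_adj_eval; [apply Hy | exact HyB | exact (Hf_eval y x Hy HyB)].
Qed.

Lemma K_X_adj : forall x, K_X Q' x.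
Proof. apply qm_gen_nonneg; [apply alg_adj_subalg | exact HSA | exact HS_nonneg]. Qed.

Lemma m_image_eq_adj : m_image_eq A Q'.
Proof.
  split.
  - intros x. split; [repeat split | intros g Hg; apply K_X_adj, Hg].
  - intros y Hy.
    assert (HyB : K_Y B Q y).
    { apply (K_Y_restrict A B Q Q'); [apply alg_adj_base | | exact Hy].
      intros k Hk. apply qm_gen_base, HQS, Hk. }
    destruct (proj2 Hm y HyB) as [x Hx].
    exists x. apply (K_Y_adj_eval y x Hy). exact Hx.
Qed.

Lemma restr_injective_adj : restr_injective B A Q'.
Proof.
  intros y1 y2 Hy1 Hy2 Hy12 a Ha.
  destruct (proj2 m_image_eq_adj y1 Hy1) as [x Hx].
  assert (HyB : forall b, B b -> y2 b = b x).
  { intros b Hb. rewrite <- Hy12 by exact Hb. apply Hx, alg_adj_base, Hb. }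
  rewrite (Hx a Ha). symmetry. exact (K_Y_adj_eval y2 x Hy2 HyB a Ha).
Qed.

Theorem prop_concl_adj : prop_concl B A Q'.
Proof. split; [exact restr_injective_adj | split; [exact K_X_adj | exact m_image_eq_adj]]. Qed.

End Extension.

Lemma chi_piecewise {X : Type} (g h q : X -> R) (x : X) :
  (0 <= q x -> g x * chi_ge0 q x + h x * chi_lt0 q x = g x) /\
  (q x < 0 -> g x * chi_ge0 q x + h x * chi_lt0 q x = h x).
Proof.
  unfold chi_ge0, chi_lt0.
  destruct (Rle_dec 0 (q x)), (Rlt_dec (q x) 0); split; intro; (lra || ring).
Qed.

Section Adjoining.
Context {X : Type} (B Q : (X -> R) -> Prop).
Hypothesis HQ : is_qmodule B Q.
Hypothesis HKX : forall x, K_X Q x.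
Hypothesis Hm : m_image_eq B Q.

Lemma qmodule_in_adj (f k : X -> R) : Q k -> alg_adj B f k.
Proof. intros Hk. apply alg_adj_base, (proj1 HQ), Hk. Qed.

Lemma qmodule_nonneg (k : X -> R) : Q k -> forall x, 0 <= k x.
Proof. intros Hk x. exact (HKX x k Hk). Qed.

Lemma prop_concl_odd_root (r : nat) (g f : X -> R) :
  Nat.Odd r -> B g -> (forall x, f x ^ r = g x) ->
  prop_concl B (alg_adj B f) (qm_gen (alg_adj B f) Q).
Proof.
  intros Hr Hg Hfg.
  apply (prop_concl_adj B Q Q f Hm); [auto | apply qmodule_in_adj | apply qmodule_nonneg |].
  intros y x [Hy _] HyB. apply (pow_odd_inj _ _ r Hr).
  rewrite <- (char_pow _ (alg_adj_subalg B f) y Hy f r (alg_adj_gen B f)).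
  replace (fun z => f z ^ r) with g
    by (apply functional_extensionality; intro z; symmetry; apply Hfg).
  rewrite Hfg. exact (HyB g Hg).
Qed.

Lemma prop_concl_even_root (s : nat) (g f : X -> R) :
  (0 < s)%nat -> B g -> (forall x, 0 <= f x /\ f x ^ s = g x) ->
  prop_concl B (alg_adj B f) (qm_gen (alg_adj B f) (fun k => Q k \/ k = f)).
Proof.
  intros Hs Hg Hfg.
  apply (prop_concl_adj B Q _ f Hm); [auto | | |].
  - intros k [Hk | ->]; [apply qmodule_in_adj, Hk | apply alg_adj_gen].
  - intros k [Hk | ->]; [apply qmodule_nonneg, Hk | apply Hfg].
  - intros y x [Hy Hpos] HyB. apply (pow_inj_nonneg _ _ s Hs).
    + apply Hpos, qm_gen_base. right. reflexivity.
    + apply Hfg.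
    + rewrite <- (char_pow _ (alg_adj_subalg B f) y Hy f s (alg_adj_gen B f)).
      replace (fun z => f z ^ s) with g
        by (apply functional_extensionality; intro z; symmetry; apply Hfg).
      rewrite (proj2 (Hfg x)). exact (HyB g Hg).
Qed.

Lemma prop_concl_inverse (g f : X -> R) :
  B g -> (forall x, g x <> 0) -> (forall x, f x = / g x) ->
  prop_concl B (alg_adj B f) (qm_gen (alg_adj B f) Q).
Proof.
  intros Hg Hg0 Hfg.
  apply (prop_concl_adj B Q Q f Hm); [auto | apply qmodule_in_adj | apply qmodule_nonneg |].
  intros y x [Hy _] HyB.
  assert (Hyfg : y f * g x = 1).
  { rewrite <- (HyB g Hg), <- (char_mul _ y Hy f g (alg_adj_gen B f) (alg_adj_base B f g Hg)).
    replace (fun z => f z * g z) with (fun _ : X => 1)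
      by (apply functional_extensionality; intro z; rewrite Hfg; field; apply Hg0).
    apply Hy. }
  rewrite Hfg. specialize (Hg0 x).
  apply (Rmult_eq_reg_r (g x)); [rewrite Hyfg; field |]; exact Hg0.
Qed.

Section Piecewise.
Variables g h q f : X -> R.
Hypothesis Hg : B g.
Hypothesis Hh : B h.
Hypothesis Hq : B q.
Hypothesis Hgh : forall x, q x = 0 -> g x = h x.
Hypothesis Hf : forall x, f x = g x * chi_ge0 q x + h x * chi_lt0 q x.

Local Notation A := (alg_adj B f).
Local Notation S := (fun k => Q k
  \/ k = (fun x => - q x * (f x - g x) ^ 2)
  \/ k = (fun x => q x * (f x - h x) ^ 2)).

Local Hint Resolve alg_adj_gen alg_adj_base : core.
Local Hint Extern 1 (alg_adj _ _ _) => apply (subalg_mul _ (alg_adj_subalg _ _)) : core.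
Local Hint Extern 1 (alg_adj _ _ _) => apply (subalg_opp _ (alg_adj_subalg _ _)) : core.
Local Hint Extern 1 (alg_adj _ _ _) => apply (subalg_sub _ (alg_adj_subalg _ _)) : core.
Local Hint Extern 1 (alg_adj _ _ _) => apply (subalg_pow _ (alg_adj_subalg _ _)) : core.

Lemma f_piecewise (x : X) : (0 <= q x -> f x = g x) /\ (q x < 0 -> f x = h x).
Proof. rewrite Hf. apply chi_piecewise. Qed.

Lemma char_piecewise_eval (y : (X -> R) -> R) (x : X) :
  K_Y A (qm_gen A S) y -> (forall b, B b -> y b = b x) -> y f = f x.
Proof.
  intros [Hy Hpos] HyB.
  assert (Hsub : forall u, A u -> y (fun z => f z - u z) = y f - y u)
    by (intros u Hu; apply (char_sub A (alg_adj_subalg B f) y Hy); auto).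
  assert (Hroot : (y f - g x) * (y f - h x) = 0).
  { rewrite <- (HyB g Hg), <- (HyB h Hh), <- !Hsub by auto.
    rewrite <- (char_mul A y Hy) by auto.
    apply (char_vanishing A y Hy); [auto|].
    intro z. destruct (f_piecewise z) as [Hg' Hh'].
    apply (piecewise_relations _ _ _ _ Hg' Hh'). }
  assert (Hneg : 0 <= - q x * (y f - g x) ^ 2).
  { rewrite <- (HyB q Hq), <- (HyB g Hg), <- (char_opp A y Hy q), <- Hsub,
      <- (char_pow A (alg_adj_subalg B f) y Hy _ 2), <- (char_mul A y Hy) by auto.
    apply Hpos, qm_gen_base. right; left; reflexivity. }
  assert (Hnonneg : 0 <= q x * (y f - h x) ^ 2).
  { rewrite <- (HyB q Hq), <- (HyB h Hh), <- Hsub,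
      <- (char_pow A (alg_adj_subalg B f) y Hy _ 2), <- (char_mul A y Hy) by auto.
    apply Hpos, qm_gen_base. right; right; reflexivity. }
  destruct (piecewise_root _ _ _ _ (Hgh x) Hroot Hneg Hnonneg) as [Hyg Hyh].
  destruct (f_piecewise x) as [Hg' Hh'].
  destruct (Rle_or_lt 0 (q x)) as [Hc | Hc];
    [rewrite (Hyg Hc), (Hg' Hc) | rewrite (Hyh Hc), (Hh' Hc)]; reflexivity.
Qed.

Lemma prop_concl_piecewise : prop_concl B A (qm_gen A S).
Proof.
  apply (prop_concl_adj B Q _ f Hm); [auto | | | exact char_piecewise_eval].
  - intros k [Hk | [-> | ->]]; [apply qmodule_in_adj, Hk | auto | auto].
  - intros k [Hk | [-> | ->]] x; [apply qmodule_nonneg, Hk | |];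
      destruct (f_piecewise x) as [Hg' Hh'];
      apply (piecewise_relations _ _ _ _ Hg' Hh').
Qed.

End Piecewise.

End Adjoining.

Theorem proposition3p1 (X : Type) (B Q : (X -> R) -> Prop)
  (HB : is_subalg B) (HQ : is_qmodule B Q)
  (HKX : forall x, K_X Q x) (Hm : m_image_eq B Q) :
  (forall (r : nat) (g f : X -> R),
     Nat.Odd r -> B g -> (forall x, f x ^ r = g x) ->
     prop_concl B (alg_adj B f) (qm_gen (alg_adj B f) Q)) /\
  (forall (s : nat) (g f : X -> R),
     Nat.Even s -> (0 < s)%nat -> B g -> (forall x, 0 <= g x) ->
     (forall x, 0 <= f x /\ f x ^ s = g x) ->
     prop_concl B (alg_adj B f)
       (qm_gen (alg_adj B f) (fun k => Q k \/ k = f))) /\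
  (forall (g f : X -> R),
     B g -> (forall x, g x <> 0) -> (forall x, f x = / g x) ->
     prop_concl B (alg_adj B f) (qm_gen (alg_adj B f) Q)) /\
  (forall (g h q f : X -> R),
     B g -> B h -> B q -> (forall x, q x = 0 -> g x = h x) ->
     (forall x, f x = g x * chi_ge0 q x + h x * chi_lt0 q x) ->
     prop_concl B (alg_adj B f)
       (qm_gen (alg_adj B f)
          (fun k => Q k
             \/ k = (fun x => - q x * (f x - g x) ^ 2)
             \/ k = (fun x => q x * (f x - h x) ^ 2)))).
Proof.
  split; [|split; [|split]].
  - intros r g f. apply (prop_concl_odd_root B Q HQ HKX Hm).
  - intros s g f _ Hs Hg _. apply (prop_concl_even_root B Q HQ HKX Hm s g f Hs Hg).
  - intros g f. apply (prop_concl_inverse B Q HQ HKX Hm).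
  - intros g h q f. apply (prop_concl_piecewise B Q HQ HKX Hm).
Qed.
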